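(* Every surjective closed map and every surjective open map in $\mathbf{CLS}$ is an effective descent morphism in $\mathbf{CLS}$.
   Context: A closure space is a pair $(A,\mathcal{C}_A)$ where $A$ is a set and $\mathcal{C}_A$ is a set of subsets of $A$ closed under arbitrary intersections (so $A\in\mathcal{C}_A$); elements of $\mathcal{C}_A$ are called closed. $\mathbf{CLS}$ has closure spaces as objects and, as morphisms $\alpha:A\to B$, maps with $\alpha^{-1}(B')\in\mathcal{C}_A$ for all $B'\in\mathcal{C}_B$. A morphism $p:E\to B$ is closed if $p(Y)\in\mathcal{C}_B$ for all $Y\in\mathcal{C}_E$, and open if $B\setminus p(Y)\in\mathcal{C}_B$ whenever $E\setminus Y\in\mathcal{C}_E$. For a morphism $p:E\to B$ in a category with pullbacks, a descent data for $p$ is a triple $(C,\gamma,\xi)$ with $\gamma:C\to E$, $\xi:E\times_BC\to C$ (pullback of $p$ and $p\gamma$, projections $\pi_1,\pi_2$) such that $\gamma\xi=\pi_1$, $\xi\langle\gamma,1_C\rangle=1_C$, $\xi\circ(E\times_B\xi)=\xi\circ(E\times_B\pi_2)$; morphisms are maps $f:C\to C'$ with $\gamma'f=\gamma$, $f\xi=\xi'(E\times_Bf)$. The comparison functor $K^p:(\mathbf{C}\downarrow B)\to\mathrm{Des}(p)$ is $K^p(A,\alpha)=(E\times_BA,\pi_1,E\times_B\pi_2)$, and $p$ is an effective descent morphism if $K^p$ is an equivalence of categories. *)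

From Stdlib Require Import FunctionalExtensionality PropExtensionality ProofIrrelevance.

Record CLS := {
  carrier :> Type;
  closed : (carrier -> Prop) -> Prop;
  closed_inter : forall F : (carrier -> Prop) -> Prop,
      (forall S, F S -> closed S) -> closed (fun x => forall S, F S -> S x) }.

Definition continuous {A B : CLS} (f : A -> B) : Prop :=
  forall S : B -> Prop, closed B S -> closed A (fun x => S (f x)).

Record hom (A B : CLS) := Hom { hfun :> A -> B; hcont : continuous hfun }.
Arguments Hom {A B}. Arguments hfun {A B}. Arguments hcont {A B}.

Definition surjective {E B : CLS} (p : hom E B) : Prop :=
  forall b : B, exists e : E, p e = b.

Definition closed_map {E B : CLS} (p : hom E B) : Prop :=
  forall Y : E -> Prop, closed E Y -> closed B (fun b => exists e, Y e /\ p e = b).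

Definition open_map {E B : CLS} (p : hom E B) : Prop :=
  forall Y : E -> Prop, closed E (fun e => ~ Y e) ->
    closed B (fun b => ~ exists e, Y e /\ p e = b).

Lemma closed_ext (A : CLS) (S T : A -> Prop) :
  (forall x, S x <-> T x) -> closed A S -> closed A T.
Proof.
  intros H HS. replace T with S; auto.
  apply functional_extensionality; intro x; apply propositional_extensionality; auto.
Qed.

Lemma closed_and (A : CLS) (S T : A -> Prop) :
  closed A S -> closed A T -> closed A (fun x => S x /\ T x).
Proof.
  intros HS HT.
  apply closed_ext with (fun x => forall U, (U = S \/ U = T) -> U x).
  - intro x; split.
    + intro H; split; apply H; auto.
    + intros [H1 H2] U [-> | ->]; auto.
  - apply closed_inter. intros U [-> | ->]; auto.
Qed.

Lemma cont_id (A : CLS) : continuous (fun x : A => x).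
Proof. intros S HS; exact HS. Qed.

Lemma cont_comp {A B C : CLS} (f : A -> B) (g : B -> C) :
  continuous f -> continuous g -> continuous (fun x => g (f x)).
Proof. intros Hf Hg S HS. exact (Hf _ (Hg S HS)). Qed.

Definition hid (A : CLS) : hom A A := Hom (fun x => x) (cont_id A).
Definition hcomp {A B C : CLS} (g : hom B C) (f : hom A B) : hom A C :=
  Hom (fun x => g (f x)) (cont_comp f g (hcont f) (hcont g)).

(** * Pullbacks in CLS
   X x_B Y = {(x,y) | f x = g y} with the initial closure structure w.r.t.
   the two projections: a set is closed iff it is the intersection of all
   sets pi1^-1(U) /\ pi2^-1(V) (U, V closed) containing it. *)
Section Pullback.
Context {X Y B : CLS} (f : X -> B) (g : Y -> B).

Definition pb_carrier : Type := { xy : X * Y | f (fst xy) = g (snd xy) }.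

Definition pb_closed (S : pb_carrier -> Prop) : Prop :=
  forall z : pb_carrier,
    (forall (U : X -> Prop) (V : Y -> Prop), closed X U -> closed Y V ->
       (forall w, S w -> U (fst (proj1_sig w)) /\ V (snd (proj1_sig w))) ->
       U (fst (proj1_sig z)) /\ V (snd (proj1_sig z))) ->
    S z.

Lemma pb_closed_inter : forall F : (pb_carrier -> Prop) -> Prop,
  (forall S, F S -> pb_closed S) -> pb_closed (fun x => forall S, F S -> S x).
Proof.
  intros F HF z Hz S FS. apply (HF S FS z).
  intros U V HU HV HS. apply Hz; auto.
  intros w Hw. apply HS. apply Hw. exact FS.
Qed.

Definition PB : CLS := {| carrier := pb_carrier; closed := pb_closed;
                          closed_inter := pb_closed_inter |}.

Definition pbpt (x : X) (y : Y) (H : f x = g y) : PB :=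
  exist (fun xy : X * Y => f (fst xy) = g (snd xy)) (x, y) H.

Lemma pbpt_eq (x x' : X) (y y' : Y) (H : f x = g y) (H' : f x' = g y') :
  x = x' -> y = y' -> pbpt x y H = pbpt x' y' H'.
Proof.
  intros <- <-. unfold pbpt. f_equal. apply proof_irrelevance.
Qed.

Lemma full_closed (A : CLS) : closed A (fun x => forall S : A -> Prop, False -> S x).
Proof. apply closed_inter. intros S []. Qed.

Lemma cont_pi1 : continuous (fun z : PB => fst (proj1_sig z)).
Proof.
  intros U HU z Hz.
  apply (Hz U (fun y => forall S : Y -> Prop, False -> S y) HU (full_closed Y)).
  intros w Hw; split; [exact Hw | intros S []].
Qed.

Lemma cont_pi2 : continuous (fun z : PB => snd (proj1_sig z)).
Proof.
  intros V HV z Hz.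
  apply (Hz (fun x => forall S : X -> Prop, False -> S x) V (full_closed X) HV).
  intros w Hw; split; [intros S [] | exact Hw].
Qed.

Definition pi1 : hom PB X := Hom (fun z : PB => fst (proj1_sig z)) cont_pi1.
Definition pi2 : hom PB Y := Hom (fun z : PB => snd (proj1_sig z)) cont_pi2.

Lemma pb_pair_cont (Z : CLS) (h : Z -> PB) :
  continuous (fun z => fst (proj1_sig (h z))) ->
  continuous (fun z => snd (proj1_sig (h z))) -> continuous h.
Proof.
  intros Ha Hb S HS.
  apply closed_ext with (fun z => forall T : Z -> Prop,
    (exists U V, closed X U /\ closed Y V /\
       (forall w, S w -> U (fst (proj1_sig w)) /\ V (snd (proj1_sig w))) /\
       T = (fun z => U (fst (proj1_sig (h z))) /\ V (snd (proj1_sig (h z))))) -> T z).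
  - intro z; split.
    + intro H. apply HS. intros U V HU HV HSUV.
      apply (H (fun z => U (fst (proj1_sig (h z))) /\ V (snd (proj1_sig (h z))))).
      exists U, V; split; [exact HU|split; [exact HV|split; [exact HSUV|reflexivity]]].
    + intros Hz T [U [V [HU [HV [HSUV ->]]]]]. apply HSUV; exact Hz.
  - apply closed_inter. intros T [U [V [HU [HV [_ ->]]]]].
    apply closed_and; [apply (Ha U HU) | apply (Hb V HV)].
Qed.

End Pullback.

(** * A minimal notion of category (hom-equality is a setoid) and
      equivalence of categories (functor with a quasi-inverse functor and
      natural isomorphisms 1 ~ GF, FG ~ 1). *)
Record Cat := {
  Ob : Type;
  Mor : Ob -> Ob -> Type;
  MEq : forall a b, Mor a b -> Mor a b -> Prop;
  Mid : forall a, Mor a a;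
  Mcomp : forall x y z, Mor y z -> Mor x y -> Mor x z }.
Arguments MEq {c a b}. Arguments Mid {c}. Arguments Mcomp {c x y z}.

Record Functor (C D : Cat) := {
  F0 : Ob C -> Ob D;
  F1 : forall a b, Mor C a b -> Mor D (F0 a) (F0 b) }.
Arguments F0 {C D}. Arguments F1 {C D} _ {a b}.

Definition is_functor {C D : Cat} (F : Functor C D) : Prop :=
  (forall a b (f g : Mor C a b), MEq f g -> MEq (F1 F f) (F1 F g)) /\
  (forall a, MEq (F1 F (Mid a)) (Mid (F0 F a))) /\
  (forall a b c (f : Mor C a b) (g : Mor C b c),
      MEq (F1 F (Mcomp g f)) (Mcomp (F1 F g) (F1 F f))).

Definition is_equivalence {C D : Cat} (F : Functor C D) : Prop :=
  is_functor F /\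
  exists G : Functor D C, is_functor G /\
   (exists (eta : forall a, Mor C a (F0 G (F0 F a)))
           (eta' : forall a, Mor C (F0 G (F0 F a)) a),
      (forall a, MEq (Mcomp (eta' a) (eta a)) (Mid a)) /\
      (forall a, MEq (Mcomp (eta a) (eta' a)) (Mid _)) /\
      (forall a b (f : Mor C a b),
          MEq (Mcomp (F1 G (F1 F f)) (eta a)) (Mcomp (eta b) f))) /\
   (exists (eps : forall d, Mor D (F0 F (F0 G d)) d)
           (eps' : forall d, Mor D d (F0 F (F0 G d))),
      (forall d, MEq (Mcomp (eps' d) (eps d)) (Mid _)) /\
      (forall d, MEq (Mcomp (eps d) (eps' d)) (Mid d)) /\
      (forall d d' (g : Mor D d d'),
          MEq (Mcomp g (eps d)) (Mcomp (eps d') (F1 F (F1 G g))))).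

Section Slice.
Context (B : CLS).

Record SliceObj := { sdom : CLS; smap : hom sdom B }.
Record SliceHom (X Y : SliceObj) := {
  shom : hom (sdom X) (sdom Y);
  scomm : forall x, smap Y (shom x) = smap X x }.
Arguments shom {X Y}. Arguments scomm {X Y}.

Definition slice_id (X : SliceObj) : SliceHom X X :=
  {| shom := hid (sdom X); scomm := fun x => eq_refl |}.
Definition slice_comp (X Y Z : SliceObj) (g : SliceHom Y Z) (f : SliceHom X Y)
  : SliceHom X Z :=
  {| shom := hcomp (shom g) (shom f);
     scomm := fun x => eq_trans (scomm g (shom f x)) (scomm f x) |}.

Definition SliceCat : Cat := {|
  Ob := SliceObj; Mor := SliceHom;
  MEq := fun X Y f g => forall x, shom f x = shom g x;
  Mid := slice_id; Mcomp := slice_comp |}.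
End Slice.
Arguments shom {B X Y}. Arguments scomm {B X Y}.
Arguments sdom {B}. Arguments smap {B}.

Section Descent.
Context {E B : CLS} (p : hom E B).

Definition EC {C : CLS} (gam : hom C E) : CLS := PB p (fun c => p (gam c)).

Record DesObj := {
  dC : CLS;
  dgam : hom dC E;
  dxi : hom (EC dgam) dC;
  d_ax1 : forall z : EC dgam, dgam (dxi z) = fst (proj1_sig z);
  d_ax2 : forall c : dC, dxi (pbpt p (fun c => p (dgam c)) (dgam c) c eq_refl) = c;
  (* xi (E x_B xi) = xi (E x_B pi2), evaluated at (e', (e, c)) in
     E x_B (E x_B C), where p e' = p e and p e = p (gamma c) *)
  d_ax3 : forall (e' e : E) (c : dC) (H1 : p e' = p e) (H2 : p e = p (dgam c)),
      dxi (pbpt p (fun c => p (dgam c)) e' (dxi (pbpt p (fun c => p (dgam c)) e c H2))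
             (eq_trans H1 (eq_sym (f_equal p (d_ax1 (pbpt p (fun c => p (dgam c)) e c H2))))))
      = dxi (pbpt p (fun c => p (dgam c)) e' c (eq_trans H1 H2)) }.

Record DesHom (D D' : DesObj) := {
  dh : hom (dC D) (dC D');
  dh_gam : forall c, dgam D' (dh c) = dgam D c;
  dh_xi : forall (e : E) (c : dC D) (H : p e = p (dgam D c)),
      dh (dxi D (pbpt p (fun c => p (dgam D c)) e c H))
      = dxi D' (pbpt p (fun c => p (dgam D' c)) e (dh c)
                  (eq_trans H (eq_sym (f_equal p (dh_gam c))))) }.
Arguments dh {D D'}. Arguments dh_gam {D D'}. Arguments dh_xi {D D'}.

Lemma des_id_xi (D : DesObj) (e : E) (c : dC D) (H : p e = p (dgam D c)) :
  hid (dC D) (dxi D (pbpt p (fun c => p (dgam D c)) e c H))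
  = dxi D (pbpt p (fun c => p (dgam D c)) e (hid (dC D) c)
             (eq_trans H (eq_sym (f_equal p (eq_refl (dgam D c)))))).
Proof. simpl. f_equal; try (apply pbpt_eq; reflexivity). Qed.

Definition des_id (D : DesObj) : DesHom D D :=
  {| dh := hid (dC D); dh_gam := fun c => eq_refl; dh_xi := des_id_xi D |}.

Section Comp.
Context (D1 D2 D3 : DesObj) (g : DesHom D2 D3) (f : DesHom D1 D2).

Lemma des_comp_gam (c : dC D1) :
  dgam D3 (hcomp (dh g) (dh f) c) = dgam D1 c.
Proof. exact (eq_trans (dh_gam g (dh f c)) (dh_gam f c)). Defined.

Lemma des_comp_xi (e : E) (c : dC D1) (H : p e = p (dgam D1 c)) :
  hcomp (dh g) (dh f) (dxi D1 (pbpt p (fun c => p (dgam D1 c)) e c H))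
  = dxi D3 (pbpt p (fun c => p (dgam D3 c)) e (hcomp (dh g) (dh f) c)
              (eq_trans H (eq_sym (f_equal p (des_comp_gam c))))).
Proof.
  simpl. rewrite (dh_xi f). rewrite (dh_xi g). f_equal. apply pbpt_eq; reflexivity.
Qed.

Definition des_comp : DesHom D1 D3 :=
  {| dh := hcomp (dh g) (dh f); dh_gam := des_comp_gam; dh_xi := des_comp_xi |}.
End Comp.

Definition DesCat : Cat := {|
  Ob := DesObj; Mor := DesHom;
  MEq := fun D D' f g => forall c, dh f c = dh g c;
  Mid := des_id; Mcomp := des_comp |}.

Section K.
Context (X : SliceObj B).
Let A := sdom X.
Let al := smap X.

(* K^p(A, alpha) = (E x_B A, pi1, E x_B pi2) *)
Definition K_C : CLS := PB p al.
Definition K_gam : hom K_C E := pi1 p al.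

Definition K_xi_fun (w : EC K_gam) : K_C :=
  pbpt p al (fst (proj1_sig w)) (snd (proj1_sig (snd (proj1_sig w))))
       (eq_trans (proj2_sig w) (proj2_sig (snd (proj1_sig w)))).

Lemma K_xi_cont : continuous K_xi_fun.
Proof.
  apply pb_pair_cont.
  - exact (cont_pi1 p (fun c => p (K_gam c))).
  - exact (cont_comp _ _ (cont_pi2 p (fun c => p (K_gam c))) (cont_pi2 p al)).
Qed.

Definition K_xi : hom (EC K_gam) K_C := Hom K_xi_fun K_xi_cont.

Lemma K_ax1 : forall z : EC K_gam, K_gam (K_xi z) = fst (proj1_sig z).
Proof. reflexivity. Qed.

Lemma K_ax2 : forall c : K_C,
  K_xi (pbpt p (fun c => p (K_gam c)) (K_gam c) c eq_refl) = c.
Proof.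
  intros [[e a] H]. simpl. unfold K_xi_fun. simpl.
  unfold pbpt. f_equal. apply proof_irrelevance.
Qed.

Lemma K_ax3 : forall (e' e : E) (c : K_C) (H1 : p e' = p e) (H2 : p e = p (K_gam c)),
  K_xi (pbpt p (fun c => p (K_gam c)) e' (K_xi (pbpt p (fun c => p (K_gam c)) e c H2))
         (eq_trans H1 (eq_sym (f_equal p (K_ax1 (pbpt p (fun c => p (K_gam c)) e c H2))))))
  = K_xi (pbpt p (fun c => p (K_gam c)) e' c (eq_trans H1 H2)).
Proof.
  intros. simpl. unfold K_xi_fun. apply pbpt_eq; reflexivity.
Qed.

Definition K_obj : DesObj :=
  {| dC := K_C; dgam := K_gam; dxi := K_xi;
     d_ax1 := K_ax1; d_ax2 := K_ax2; d_ax3 := K_ax3 |}.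
End K.

Section Kmor.
Context (X Y : SliceObj B) (f : SliceHom B X Y).

Definition K_mor_fun (z : K_C X) : K_C Y :=
  pbpt p (smap Y) (fst (proj1_sig z)) (shom f (snd (proj1_sig z)))
       (eq_trans (proj2_sig z) (eq_sym (scomm f (snd (proj1_sig z))))).

Lemma K_mor_cont : continuous K_mor_fun.
Proof.
  apply pb_pair_cont.
  - exact (cont_pi1 p (smap X)).
  - exact (cont_comp _ _ (cont_pi2 p (smap X)) (hcont (shom f))).
Qed.

Definition K_mor_hom : hom (K_C X) (K_C Y) := Hom K_mor_fun K_mor_cont.

Lemma K_mor_gam : forall c, K_gam Y (K_mor_hom c) = K_gam X c.
Proof. reflexivity. Qed.

Lemma K_mor_xi : forall (e : E) (c : K_C X) (H : p e = p (K_gam X c)),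
  K_mor_hom (K_xi X (pbpt p (fun c => p (K_gam X c)) e c H))
  = K_xi Y (pbpt p (fun c => p (K_gam Y c)) e (K_mor_hom c)
              (eq_trans H (eq_sym (f_equal p (K_mor_gam c))))).
Proof. intros. simpl. unfold K_mor_fun, K_xi_fun. apply pbpt_eq; reflexivity. Qed.

Definition K_mor : DesHom (K_obj X) (K_obj Y) :=
  @Build_DesHom (K_obj X) (K_obj Y) K_mor_hom K_mor_gam K_mor_xi.
End Kmor.

Definition Kp : Functor (SliceCat B) DesCat :=
  @Build_Functor (SliceCat B) DesCat K_obj K_mor.

Definition effective_descent : Prop := is_equivalence Kp.

End Descent.

(* Choose a set-theoretic section s of p.  Given descent data (C, gam, xi), the
   inverse functor G sends it to the set A of "normalized" points c with
   gam c = s (p (gam c)); every c has the normal form r c = xi (s (p (gam c)), c),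
   and A carries the quotient closure structure along r (T closed iff T o r is
   closed in C), together with alpha = p o gam.  The unit X -> G(K X) is
   x |-> (s (alpha x), x), the counit E x_B G(D) -> C is (e, a) |-> xi (e, a).
   All equations hold by the descent axioms; the only non-formal points are
   continuity of the unit and of the counit.  Both rest on two facts about the
   pullback projection pi2 : E x_B X -> X, proved first: for p closed the
   fibrewise existential image of a closed set is closed, for p open and
   surjective the fibrewise universal image is closed.  From them we get that
   pi2 reflects closed sets, and that the preimage under xi of a closed set of C
   is a rectangle U x T with T closed and invariant under xi, hence descending
   to A.  The theorem follows by choosing s with the axiom of choice. *)

From Stdlib Require Import ProofIrrelevance Classical IndefiniteDescription.

Lemma sig_eq {T : Type} {P : T -> Prop} (x y : sig P) :
  proj1_sig x = proj1_sig y -> x = y.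
Proof. destruct x, y; simpl; intros ->; f_equal; apply proof_irrelevance. Qed.

Lemma pb_ext {X Y B : CLS} (f : X -> B) (g : Y -> B) (z z' : PB f g) :
  fst (proj1_sig z) = fst (proj1_sig z') -> snd (proj1_sig z) = snd (proj1_sig z') ->
  z = z'.
Proof.
  destruct z as [[x y] H], z' as [[x' y'] H']; simpl; intros -> ->.
  f_equal; apply proof_irrelevance.
Qed.

(* The closed sets of a pullback are exactly the closed rectangles U x V:
   being an intersection of closed rectangles, a closed set is itself one. *)
Lemma pb_closed_rect {X Y B : CLS} (f : X -> B) (g : Y -> B) (Z : PB f g -> Prop) :
  closed (PB f g) Z -> exists U V, closed X U /\ closed Y V /\
    forall z, Z z <-> U (fst (proj1_sig z)) /\ V (snd (proj1_sig z)).
Proof.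
  intro HZ.
  pose (rect U V := closed X U /\ closed Y V /\
          forall w, Z w -> U (fst (proj1_sig w)) /\ V (snd (proj1_sig w))).
  exists (fun x => forall U, (exists V, rect U V) -> U x).
  exists (fun y => forall V, (exists U, rect U V) -> V y).
  split; [|split].
  - apply closed_inter. intros U [V [HU _]]; exact HU.
  - apply closed_inter. intros V [U [_ [HV _]]]; exact HV.
  - intro z; split.
    + intro Hz; split.
      * intros U [V [_ [_ H]]]. exact (proj1 (H z Hz)).
      * intros V [U [_ [_ H]]]. exact (proj2 (H z Hz)).
    + intros [H1 H2]. apply HZ. intros U V HU HV HS.
      split; [apply H1; exists V | apply H2; exists U]; unfold rect; auto.
Qed.

Lemma closed_rect {X Y B : CLS} (f : X -> B) (g : Y -> B) (U : X -> Prop) (V : Y -> Prop) :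
  closed X U -> closed Y V ->
  closed (PB f g) (fun z => U (fst (proj1_sig z)) /\ V (snd (proj1_sig z))).
Proof. intros HU HV. apply closed_and; [exact (cont_pi1 f g U HU) | exact (cont_pi2 f g V HV)]. Qed.

Section FibreImages.
Context {E B X : CLS} (p : hom E B) (al : X -> B) (Hal : continuous al).

(* p closed: the set of x over which some point of a closed Z lies is closed,
   being V /\ alpha^-1 (p U) for the rectangle U x V = Z. *)
Lemma closed_exists_fibre (Hc : closed_map p) (Z : PB p al -> Prop) :
  closed (PB p al) Z ->
  closed X (fun x => exists e (H : p e = al x), Z (pbpt p al e x H)).
Proof.
  intro HZ. destruct (pb_closed_rect _ _ Z HZ) as [U [V [HU [HV HZe]]]].
  apply closed_ext with (fun x => V x /\ (fun b => exists e, U e /\ p e = b) (al x)).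
  - intro x; split.
    + intros [Vx [e [Ue He]]]. exists e, He. apply HZe. simpl. auto.
    + intros [e [H Hz]]. apply HZe in Hz. simpl in Hz. destruct Hz. split; eauto.
  - apply closed_and; [exact HV | exact (Hal _ (Hc U HU))].
Qed.

(* p open and surjective: the set of x whose whole (nonempty) fibre lies in a
   closed Z is closed, being V /\ alpha^-1 (B \ p (E \ U)). *)
Lemma closed_forall_fibre (Ho : open_map p) (Hs : surjective p) (Z : PB p al -> Prop) :
  closed (PB p al) Z ->
  closed X (fun x => forall e (H : p e = al x), Z (pbpt p al e x H)).
Proof.
  intro HZ. destruct (pb_closed_rect _ _ Z HZ) as [U [V [HU [HV HZe]]]].
  apply closed_ext with (fun x => V x /\ (fun b => ~ exists e, ~ U e /\ p e = b) (al x)).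
  - intro x; split.
    + intros [Vx Hn] e H. apply HZe. simpl. split; [|exact Vx].
      apply NNPP; intro HnU. apply Hn. exists e; auto.
    + intros Hall. destruct (Hs (al x)) as [e0 He0]. split.
      * exact (proj2 (proj1 (HZe _) (Hall e0 He0))).
      * intros [e [HnU He]]. exact (HnU (proj1 (proj1 (HZe _) (Hall e He)))).
  - apply closed_and; [exact HV|]. apply (Hal (fun b => ~ exists e, ~ U e /\ p e = b)).
    apply Ho. apply closed_ext with U; [|exact HU].
    intro e; split; [intros h hn; auto | apply NNPP].
Qed.

Lemma closed_of_pullback (Hs : surjective p) (Hco : closed_map p \/ open_map p)
  (Q : X -> Prop) :
  closed (PB p al) (fun z => Q (snd (proj1_sig z))) -> closed X Q.
Proof.
  intro HQ. destruct Hco as [Hc | Ho].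
  - apply closed_ext with (fun x => exists e (H : p e = al x), Q x).
    + intro x; split; [intros [e [H Hq]]; exact Hq|].
      intro Hq. destruct (Hs (al x)) as [e He]. exists e, He; exact Hq.
    + exact (closed_exists_fibre Hc _ HQ).
  - apply closed_ext with (fun x => forall e (H : p e = al x), Q x).
    + intro x; split; [|intros Hq e H; exact Hq].
      intro Hq. destruct (Hs (al x)) as [e He]. exact (Hq e He).
    + exact (closed_forall_fibre Ho Hs _ HQ).
Qed.

End FibreImages.

Section DescentDatum.
Context {E B : CLS} (p : hom E B) (D : DesObj p).

Local Notation C := (dC p D).
Local Notation gam := (dgam p D).
Local Notation xi := (dxi p D).
Local Notation pt e c H := (pbpt p (fun c0 => p (gam c0)) e c H).

Lemma xi_ext e e' c c' H H' : e = e' -> c = c' -> xi (pt e c H) = xi (pt e' c' H').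
Proof. intros; f_equal; apply pbpt_eq; auto. Qed.

Lemma xi_unit e c H : e = gam c -> xi (pt e c H) = c.
Proof. intro He. rewrite <- (d_ax2 p D c) at 2. apply xi_ext; auto. Qed.

Lemma xi_cocycle e' e c H H' H'' :
  xi (pt e' (xi (pt e c H)) H') = xi (pt e' c H'').
Proof.
  assert (H1 : p e' = p e) by exact (eq_trans H' (f_equal p (d_ax1 p D (pt e c H)))).
  transitivity (xi (pt e' (xi (pt e c H))
    (eq_trans H1 (eq_sym (f_equal p (d_ax1 p D (pt e c H))))))).
  { apply xi_ext; reflexivity. }
  rewrite (d_ax3 p D e' e c H1 H). apply xi_ext; reflexivity.
Qed.

Lemma fibre_xi e c H : p (gam (xi (pt e c H))) = p (gam c).
Proof. rewrite d_ax1. exact H. Qed.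

Definition saturated (T : C -> Prop) : Prop :=
  forall e c H, T (xi (pt e c H)) <-> T c.

Definition fibre_ex (P : C -> Prop) (c : C) : Prop :=
  exists e (H : p e = p (gam c)), P (xi (pt e c H)).
Definition fibre_all (P : C -> Prop) (c : C) : Prop :=
  forall e (H : p e = p (gam c)), P (xi (pt e c H)).

Lemma saturated_fibre_ex P : saturated (fibre_ex P).
Proof.
  intros e c H. split.
  - intros [e' [H' HP]]. exists e', (eq_trans H' (fibre_xi e c H)).
    erewrite <- xi_cocycle. exact HP.
  - intros [e' [H' HP]]. exists e', (eq_trans H' (eq_sym (fibre_xi e c H))).
    erewrite xi_cocycle. exact HP.
Qed.

Lemma saturated_fibre_all P : saturated (fibre_all P).
Proof.
  intros e c H. split.
  - intros HP e' H'. erewrite <- xi_cocycle.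
    apply (HP e' (eq_trans H' (eq_sym (fibre_xi e c H)))).
  - intros HP e' H'. erewrite xi_cocycle.
    apply (HP e' (eq_trans H' (fibre_xi e c H))).
Qed.

(* Writing xi^-1 S = U x V, the cocycle identity gives
   S (xi (e0, c)) <-> U e0 /\ V (xi (e, c)) for any e in the fibre of c, so
   T may be either fibrewise saturation of V, whichever is closed. *)
Lemma xi_preimage_rect (Hs : surjective p) (Hco : closed_map p \/ open_map p)
  (S : C -> Prop) : closed C S ->
  exists U T, closed E U /\ closed C T /\ saturated T /\
    forall e c H, S (xi (pt e c H)) <-> U e /\ T c.
Proof.
  intro HS.
  destruct (pb_closed_rect _ _ _ (hcont xi S HS)) as [U [V [HU [HV HW]]]].
  assert (Hshift : forall e0 e c H0 H, S (xi (pt e0 c H0)) <-> U e0 /\ V (xi (pt e c H))).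
  { intros e0 e c H0 H.
    rewrite <- (xi_cocycle e0 e c H (eq_trans H0 (eq_sym (fibre_xi e c H))) H0).
    exact (HW (pt e0 _ _)). }
  assert (Hdecomp : forall T, (forall c, fibre_all V c -> T c) ->
            (forall c, T c -> fibre_ex V c) ->
            forall e c H, S (xi (pt e c H)) <-> U e /\ T c).
  { intros T Hall Hex e c H. split.
    - intro HSe. split; [exact (proj1 (proj1 (Hshift e e c H H) HSe))|].
      apply Hall. intros e' H'. exact (proj2 (proj1 (Hshift e e' c H H') HSe)).
    - intros [Ue Tc]. destruct (Hex c Tc) as [e' [H' Ve']].
      exact (proj2 (Hshift e e' c H H') (conj Ue Ve')). }
  assert (HVxi : closed (EC p gam) (fun w => V (xi w))) by exact (hcont xi V HV).
  assert (Hpg : continuous (fun c => p (gam c)))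
    by exact (cont_comp _ _ (hcont gam) (hcont p)).
  assert (Hall_ex : forall c, fibre_all V c -> fibre_ex V c).
  { intros c Hall. exists (gam c), eq_refl. apply Hall. }
  exists U. destruct Hco as [Hc | Ho].
  - exists (fibre_ex V). split; [exact HU|]. split.
    + exact (closed_exists_fibre p _ Hpg Hc _ HVxi).
    + split; [apply saturated_fibre_ex | apply Hdecomp; auto].
  - exists (fibre_all V). split; [exact HU|]. split.
    + exact (closed_forall_fibre p _ Hpg Ho Hs _ HVxi).
    + split; [apply saturated_fibre_all | apply Hdecomp; auto].
Qed.

End DescentDatum.

Section Quotient.
Context {E B : CLS} (p : hom E B) (s : B -> E) (Hs : forall b, p (s b) = b).

Local Notation pt D e c H := (pbpt p (fun c0 => p (dgam p D c0)) e c H).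

Lemma section_surjective : surjective p.
Proof. intro b; exists (s b); apply Hs. Qed.

Section Normalization.
Context (D : DesObj p).
Local Notation C := (dC p D).
Local Notation gam := (dgam p D).
Local Notation xi := (dxi p D).

Definition normal_form (c : C) : C := xi (pt D (s (p (gam c))) c (Hs _)).
Definition is_normal (c : C) : Prop := gam c = s (p (gam c)).

Lemma normal_form_gam c : gam (normal_form c) = s (p (gam c)).
Proof. unfold normal_form. rewrite d_ax1. reflexivity. Qed.

Lemma normal_form_p c : p (gam (normal_form c)) = p (gam c).
Proof. rewrite normal_form_gam. apply Hs. Qed.

Lemma normal_form_normal c : is_normal (normal_form c).
Proof. unfold is_normal. rewrite normal_form_p. apply normal_form_gam. Qed.

Lemma normal_form_id c : is_normal c -> normal_form c = c.
Proof. intro Hc. apply xi_unit. exact (eq_sym Hc). Qed.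

Lemma normal_form_xi e c H : normal_form (xi (pt D e c H)) = normal_form c.
Proof.
  unfold normal_form.
  rewrite (xi_cocycle p D _ e c H _ (eq_trans (Hs _) (fibre_xi p D e c H))).
  apply xi_ext; [rewrite (fibre_xi p D e c H)|]; reflexivity.
Qed.

Lemma xi_normal_form e c H H' : xi (pt D e (normal_form c) H) = xi (pt D e c H').
Proof. apply xi_cocycle. Qed.

Definition Normal : Type := { c : C | is_normal c }.
Definition to_normal (c : C) : Normal := exist _ (normal_form c) (normal_form_normal c).
Definition quotient_closed (T : Normal -> Prop) : Prop :=
  closed C (fun c => T (to_normal c)).

Lemma quotient_closed_inter : forall F : (Normal -> Prop) -> Prop,
  (forall T, F T -> quotient_closed T) -> quotient_closed (fun x => forall T, F T -> T x).
Proof.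
  intros F HF. unfold quotient_closed.
  apply closed_ext with (fun c => forall S', (exists T, F T /\ S' = fun c => T (to_normal c)) -> S' c).
  - intro c; split.
    + intros H T FT. exact (H _ (ex_intro _ T (conj FT eq_refl))).
    + intros H S' [T [FT ->]]. exact (H T FT).
  - apply closed_inter. intros S' [T [FT ->]]. exact (HF T FT).
Qed.

Definition Quotient : CLS :=
  {| carrier := Normal; closed := quotient_closed; closed_inter := quotient_closed_inter |}.

Lemma to_normal_cont : continuous (to_normal : C -> Quotient).
Proof. intros T HT; exact HT. Qed.

Lemma closed_restrict (T : C -> Prop) :
  closed C T -> saturated p D T -> closed Quotient (fun a => T (proj1_sig a)).
Proof.
  intros HT Hsat. apply closed_ext with T; [|exact HT].
  intro c. symmetry. apply Hsat.
Qed.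

Definition alpha (a : Quotient) : B := p (gam (proj1_sig a)).

Lemma alpha_cont : continuous alpha.
Proof.
  intros S HS. apply (closed_restrict (fun c => S (p (gam c)))).
  - exact (cont_comp _ _ (hcont gam) (hcont p) S HS).
  - intros e c H. rewrite fibre_xi. tauto.
Qed.

Definition Gobj : SliceObj B := {| sdom := Quotient; smap := Hom alpha alpha_cont |}.

End Normalization.

Section Gmor.
Context (D D' : DesObj p) (f : DesHom p D D').

Lemma Gfun_normal (a : Normal D) : is_normal D' (dh p D D' f (proj1_sig a)).
Proof. unfold is_normal. rewrite dh_gam. exact (proj2_sig a). Qed.

Definition Gfun (a : Quotient D) : Quotient D' :=
  exist _ (dh p D D' f (proj1_sig a)) (Gfun_normal a).

Lemma to_normal_dh c : to_normal D' (dh p D D' f c) = Gfun (to_normal D c).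
Proof.
  apply sig_eq. simpl. unfold normal_form. rewrite dh_xi.
  apply xi_ext; [rewrite dh_gam|]; reflexivity.
Qed.

Lemma Gfun_cont : continuous Gfun.
Proof.
  intros T HT. apply closed_ext with (fun c => T (to_normal D' (dh p D D' f c))).
  - intro c. rewrite to_normal_dh. tauto.
  - exact (hcont (dh p D D' f) _ HT).
Qed.

Lemma Gfun_comm (a : Quotient D) : alpha D' (Gfun a) = alpha D a.
Proof. unfold alpha. simpl. rewrite dh_gam. reflexivity. Qed.

Definition Gmor : SliceHom B (Gobj D) (Gobj D') :=
  @Build_SliceHom B (Gobj D) (Gobj D') (@Hom (Quotient D) (Quotient D') Gfun Gfun_cont)
    Gfun_comm.
End Gmor.

Definition G : Functor (DesCat p) (SliceCat B) :=
  @Build_Functor (DesCat p) (SliceCat B) Gobj Gmor.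

Lemma G_functor : is_functor G.
Proof.
  split; [|split].
  - intros a b f g Hfg x. apply sig_eq. apply Hfg.
  - intros a x. apply sig_eq. reflexivity.
  - intros a b c f g x. apply sig_eq. reflexivity.
Qed.

Lemma Kp_functor : is_functor (Kp p).
Proof.
  split; [|split].
  - intros a b f g Hfg x. apply pbpt_eq; auto.
  - intros a x. apply pb_ext; reflexivity.
  - intros a b c f g x. apply pbpt_eq; reflexivity.
Qed.


Section Unit.
Context (Hco : closed_map p \/ open_map p) (X : SliceObj B).
Local Notation KX := (K_obj p X).

Definition unit_point (x : sdom X) : K_C p X := pbpt p (smap X) (s (smap X x)) x (Hs _).

Lemma unit_point_normal x : is_normal KX (unit_point x).
Proof. unfold is_normal. simpl. rewrite Hs. reflexivity. Qed.

Definition eta_fun (x : sdom X) : Quotient KX := exist _ (unit_point x) (unit_point_normal x).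

Lemma to_normal_K (z : K_C p X) : to_normal KX z = eta_fun (snd (proj1_sig z)).
Proof.
  apply sig_eq. apply pbpt_eq; [|reflexivity]. simpl. f_equal. exact (proj2_sig z).
Qed.

(* Continuity of the unit is exactly the fact that pi2 : E x_B X -> X
   reflects closed sets. *)
Lemma eta_cont : continuous eta_fun.
Proof.
  intros T HT.
  apply (closed_of_pullback p (smap X) (hcont (smap X)) section_surjective Hco).
  apply closed_ext with (fun z => T (to_normal KX z)); [|exact HT].
  intro z. rewrite to_normal_K. tauto.
Qed.

Lemma eta_comm (x : sdom X) : alpha KX (eta_fun x) = smap X x.
Proof. apply Hs. Qed.

Definition eta : SliceHom B X (Gobj KX) :=
  @Build_SliceHom B X (Gobj KX) (@Hom (sdom X) (Quotient KX) eta_fun eta_cont) eta_comm.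

Definition etai_fun (a : Quotient KX) : sdom X := snd (proj1_sig (proj1_sig a)).

Lemma etai_cont : continuous etai_fun.
Proof. intros T HT. exact (cont_pi2 p (smap X) T HT). Qed.

Lemma etai_comm (a : Quotient KX) : smap X (etai_fun a) = alpha KX a.
Proof. exact (eq_sym (proj2_sig (proj1_sig a))). Qed.

Definition etai : SliceHom B (Gobj KX) X :=
  @Build_SliceHom B (Gobj KX) X (@Hom (Quotient KX) (sdom X) etai_fun etai_cont) etai_comm.

Lemma eta_etai (a : Quotient KX) : eta_fun (etai_fun a) = a.
Proof.
  apply sig_eq. destruct a as [[[e x] H] Ha]. apply pb_ext; [|reflexivity].
  unfold is_normal in Ha. simpl in Ha, H. unfold etai_fun. simpl.
  rewrite <- H. exact (eq_sym Ha).
Qed.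

End Unit.

Lemma eta_natural (X Y : SliceObj B) (f : SliceHom B X Y) (x : sdom X) :
  Gfun _ _ (K_mor p X Y f) (eta_fun X x) = eta_fun Y (shom f x).
Proof. apply sig_eq. apply pb_ext; [simpl; rewrite (scomm f)|]; reflexivity. Qed.

Section Counit.
Context (Hco : closed_map p \/ open_map p) (D : DesObj p).
Local Notation KGD := (K_obj p (Gobj D)).

Definition eps_fun (z : K_C p (Gobj D)) : dC p D :=
  dxi p D (pt D (fst (proj1_sig z)) (proj1_sig (snd (proj1_sig z))) (proj2_sig z)).

(* xi^-1 S is a rectangle U x T with T saturated; T descends to the quotient,
   so eps^-1 S is the closed rectangle U x T of E x_B G(D). *)
Lemma eps_cont : continuous eps_fun.
Proof.
  intros S HS.
  destruct (xi_preimage_rect p D section_surjective Hco S HS)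
    as [U [T [HU [HT [Hsat Hrect]]]]].
  apply closed_ext with (fun z : K_C p (Gobj D) =>
    U (fst (proj1_sig z)) /\ T (proj1_sig (snd (proj1_sig z)))).
  - intro z. symmetry. apply Hrect.
  - exact (closed_rect _ _ _ _ HU (closed_restrict D T HT Hsat)).
Qed.

Lemma eps_gam (z : K_C p (Gobj D)) : dgam p D (eps_fun z) = dgam p KGD z.
Proof. apply d_ax1. Qed.

Lemma eps_xi : forall (e : E) (z : K_C p (Gobj D)) (H : p e = p (dgam p KGD z)),
  @Hom _ _ eps_fun eps_cont (dxi p KGD (pt KGD e z H))
  = dxi p D (pt D e (@Hom _ _ eps_fun eps_cont z)
        (eq_trans H (eq_sym (f_equal p (eps_gam z))))).
Proof. intros. symmetry. apply xi_cocycle. Qed.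

Definition eps : DesHom p KGD D :=
  @Build_DesHom E B p KGD D (@Hom _ _ eps_fun eps_cont) eps_gam eps_xi.

Definition epsi_fun (c : dC p D) : K_C p (Gobj D) :=
  pbpt p (smap (Gobj D)) (dgam p D c) (to_normal D c) (eq_sym (normal_form_p D c)).

Lemma epsi_cont : continuous epsi_fun.
Proof. apply pb_pair_cont; [exact (hcont (dgam p D)) | exact (to_normal_cont D)]. Qed.

Lemma epsi_gam c : dgam p KGD (epsi_fun c) = dgam p D c.
Proof. reflexivity. Qed.

Lemma epsi_xi : forall (e : E) (c : dC p D) (H : p e = p (dgam p D c)),
  @Hom _ _ epsi_fun epsi_cont (dxi p D (pt D e c H))
  = dxi p KGD (pt KGD e (@Hom _ _ epsi_fun epsi_cont c)
        (eq_trans H (eq_sym (f_equal p (epsi_gam c))))).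
Proof.
  intros. apply pb_ext; [apply d_ax1|]. apply sig_eq. apply normal_form_xi.
Qed.

Definition epsi : DesHom p D KGD :=
  @Build_DesHom E B p D KGD (@Hom _ _ epsi_fun epsi_cont) epsi_gam epsi_xi.

Lemma epsi_eps (z : K_C p (Gobj D)) : epsi_fun (eps_fun z) = z.
Proof.
  apply pb_ext; [apply d_ax1|]. apply sig_eq. simpl. unfold eps_fun.
  rewrite normal_form_xi. apply normal_form_id. exact (proj2_sig _).
Qed.

Lemma eps_epsi (c : dC p D) : eps_fun (epsi_fun c) = c.
Proof.
  unfold eps_fun, epsi_fun. simpl.
  rewrite (xi_normal_form D _ c _ eq_refl). apply xi_unit. reflexivity.
Qed.

End Counit.

Lemma eps_natural (D D' : DesObj p) (g : DesHom p D D') (z : K_C p (Gobj D)) :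
  dh p D D' g (eps_fun D z) = eps_fun D' (K_mor_fun p _ _ (Gmor D D' g) z).
Proof. unfold eps_fun. rewrite dh_xi. apply xi_ext; reflexivity. Qed.

Lemma Kp_equivalence (Hco : closed_map p \/ open_map p) : is_equivalence (Kp p).
Proof.
  split; [exact Kp_functor|].
  exists G. split; [exact G_functor|]. split.
  - exists (eta Hco), etai. split; [|split].
    + intros X x. reflexivity.
    + intros X. exact (eta_etai X).
    + intros X Y f. exact (eta_natural X Y f).
  - exists (eps Hco), epsi.
    split; [exact epsi_eps | split; [exact eps_epsi | exact eps_natural]].
Qed.

End Quotient.

Theorem theorem6p5 :
  forall (E B : CLS) (p : hom E B),
    surjective p -> (closed_map p \/ open_map p) -> effective_descent p.
Proof.
  intros E B p Hsurj Hco.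
  pose (lift b := constructive_indefinite_description _ (Hsurj b)).
  exact (Kp_equivalence p (fun b => proj1_sig (lift b)) (fun b => proj2_sig (lift b)) Hco).
Qed.
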